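(* Let $\psi:\mathbb{R}^n\to\mathbb{R}^n$ be a contraction and $\varepsilon\ge0$. If $x,x'\in\mathbb{R}^n$ are such that $L=\|\psi(x)-\psi(x')\|$ satisfies $\|x-x'\|\le L+\varepsilon$, then for all $0\le t\le1$, $$\|\psi((1-t)x+tx')-((1-t)\psi(x)+t\psi(x'))\|\le\sqrt{\varepsilon(2L+\varepsilon)}.$$
   Context: A contraction is a map with Lipschitz constant $1$ with respect to the Euclidean norm. *)

From mathcomp Require Import all_boot all_order all_algebra.
From mathcomp Require Import reals.
Set Implicit Arguments. Unset Strict Implicit. Unset Printing Implicit Defensive.
Import Order.TTheory GRing.Theory Num.Theory.
Local Open Scope ring_scope.

Definition enorm (R : realType) (n : nat) (v : 'rV[R]_n) : R :=
  Num.sqrt (\sum_(i < n) v ord0 i ^+ 2).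

Definition contraction (R : realType) (n : nat) (psi : 'rV[R]_n -> 'rV[R]_n) : Prop :=
  forall x y : 'rV[R]_n, enorm (psi x - psi y) <= enorm (x - y).

(* The 1-Lipschitz bounds |psi y - psi x| <= t|x - x'| and |psi y - psi x'| <= (1-t)|x - x'|
   at y = (1-t)x + tx', fed into the identity
   |z - ((1-t)a + tb)|^2 = (1-t)|z - a|^2 + t|z - b|^2 - t(1-t)|a - b|^2,
   bound the squared defect by t(1-t)(|x - x'|^2 - L^2); since 0 <= t(1-t) <= 1 and
   |x - x'| <= L + eps, this is at most (L + eps)^2 - L^2 = eps(2L + eps). *)
From mathcomp Require Import all_boot all_order all_algebra.
From mathcomp Require Import reals.
From mathcomp Require Import ring lra.
Set Implicit Arguments. Unset Strict Implicit.
Import Order.TTheory GRing.Theory Num.Theory.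
Local Open Scope ring_scope.

Section SquaredNorm.
Variables (R : realType) (n : nat).
Implicit Types (u v a b z x : 'rV[R]_n) (t : R).

Definition sqnorm v : R := \sum_(i < n) v ord0 i ^+ 2.

Lemma sqnorm_ge0 v : 0 <= sqnorm v.
Proof. by apply: sumr_ge0 => i _; rewrite sqr_ge0. Qed.

Lemma enorm_ge0 v : 0 <= enorm v.
Proof. exact: sqrtr_ge0. Qed.

Lemma sqr_enorm v : enorm v ^+ 2 = sqnorm v.
Proof. by rewrite sqr_sqrtr // sqnorm_ge0. Qed.

Lemma ler_sqnorm u v : enorm u <= enorm v -> sqnorm u <= sqnorm v.
Proof. by rewrite /enorm ler_sqrt // sqnorm_ge0. Qed.

Lemma sqnorm_convex_subl t x (x' : 'rV[R]_n) :
  sqnorm ((1 - t) *: x + t *: x' - x) = t ^+ 2 * sqnorm (x - x').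
Proof. by rewrite /sqnorm mulr_sumr; apply: eq_bigr => i _; rewrite !mxE; ring. Qed.

Lemma sqnorm_convex_subr t x (x' : 'rV[R]_n) :
  sqnorm ((1 - t) *: x + t *: x' - x') = (1 - t) ^+ 2 * sqnorm (x - x').
Proof. by rewrite /sqnorm mulr_sumr; apply: eq_bigr => i _; rewrite !mxE; ring. Qed.

Lemma sqnorm_sub_convex t z a b :
  sqnorm (z - ((1 - t) *: a + t *: b)) =
  (1 - t) * sqnorm (z - a) + t * sqnorm (z - b) - t * (1 - t) * sqnorm (a - b).
Proof.
rewrite /sqnorm !mulr_sumr -!big_split /= -sumrN -big_split /=.
by apply: eq_bigr => i _; rewrite !mxE; ring.
Qed.

Lemma contraction_convex_defect (psi : 'rV[R]_n -> 'rV[R]_n) t x (x' : 'rV[R]_n) :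
  contraction psi -> 0 <= t -> t <= 1 ->
  sqnorm (psi ((1 - t) *: x + t *: x') - ((1 - t) *: psi x + t *: psi x'))
  <= t * (1 - t) * (enorm (x - x') ^+ 2 - enorm (psi x - psi x') ^+ 2).
Proof.
move=> psi_contr t_ge0 t_le1; set y := (1 - t) *: x + t *: x'.
have near_x : sqnorm (psi y - psi x) <= t ^+ 2 * sqnorm (x - x').
  by rewrite -sqnorm_convex_subl; apply/ler_sqnorm/psi_contr.
have near_x' : sqnorm (psi y - psi x') <= (1 - t) ^+ 2 * sqnorm (x - x').
  by rewrite -sqnorm_convex_subr; apply/ler_sqnorm/psi_contr.
rewrite sqnorm_sub_convex !sqr_enorm.
have s_ge0 : 0 <= 1 - t by lra.
have := ler_wpM2l s_ge0 near_x; have := ler_wpM2l t_ge0 near_x'.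
have -> : t * (1 - t) * (sqnorm (x - x') - sqnorm (psi x - psi x')) =
  (1 - t) * (t ^+ 2 * sqnorm (x - x')) + t * ((1 - t) ^+ 2 * sqnorm (x - x'))
  - t * (1 - t) * sqnorm (psi x - psi x') by ring.
lra.
Qed.

End SquaredNorm.

Lemma convex_defect_bound (R : realFieldType) (t D L eps : R) :
  0 <= t -> t <= 1 -> 0 <= D -> 0 <= L -> 0 <= eps -> D <= L + eps ->
  t * (1 - t) * (D ^+ 2 - L ^+ 2) <= eps * (2 * L + eps).
Proof.
move=> t_ge0 t_le1 D_ge0 L_ge0 eps_ge0 D_le.
have t1t_ge0 : 0 <= t * (1 - t) by apply: mulr_ge0; lra.
have t1t_le1 : t * (1 - t) <= 1 by nra.
have gap_le : D ^+ 2 - L ^+ 2 <= eps * (2 * L + eps) by nra.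
have bound_ge0 : 0 <= eps * (2 * L + eps) by apply: mulr_ge0; lra.
nra.
Qed.

Theorem lemma7p4 (R : realType) (n : nat) (psi : 'rV[R]_n -> 'rV[R]_n)
  (eps : R) (x x' : 'rV[R]_n) :
  contraction psi -> 0 <= eps ->
  enorm (x - x') <= enorm (psi x - psi x') + eps ->
  forall t : R, 0 <= t -> t <= 1 ->
    enorm (psi ((1 - t) *: x + t *: x') - ((1 - t) *: psi x + t *: psi x'))
    <= Num.sqrt (eps * (2 * enorm (psi x - psi x') + eps)).
Proof.
move=> psi_contr eps_ge0 dist_le t t_ge0 t_le1.
rewrite ler_wsqrtr // -/(sqnorm _).
apply: le_trans (contraction_convex_defect x x' psi_contr t_ge0 t_le1) _.
by apply: convex_defect_bound => //; apply: enorm_ge0.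
Qed.
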